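(* Let $r\geq 2$ and let $X$ be a rose with $r$ petals, with $F\cong\pi_1(X,x_0)$ the free group on the generators $\alpha_1,\ldots,\alpha_r$ corresponding to the oriented petals. Let $Z$ be a finite, non-empty, connected graph and let $Z\to X$ be an immersion that is not a covering map. Then the immersion factors as $Z\hookrightarrow Y\to X$, where $Z$ is a subgraph of $Y$, $Y$ is a finite connected graph, $Y\to X$ is a finite-sheeted (combinatorial) covering map, and the image of the resulting homomorphism $F\to\mathrm{Sym}(V(Y))$ (given by the action of $F$ on the vertex set $V(Y)$ of $Y$ by path lifting) is exactly the alternating group $\mathrm{Alt}(V(Y))$.
   Context: A rose with $r$ petals is a graph with exactly one vertex $x_0$ and $r$ edges; each edge is oriented and labelled by a generator $\alpha_i$, giving $\pi_1(X,x_0)\cong F$ free on $\alpha_1,\dots,\alpha_r$. A combinatorial map of graphs $Y\to X$ (sending vertices to vertices and edges to edges) is equivalent to an orientation and labelling of the edges of $Y$ by $\alpha_1,\ldots,\alpha_r$. It is an immersion if it is injective on links of vertices, equivalently if at every vertex of $Y$ and for every label $\alpha_i$ there is at most one incoming and at most one outgoing edge labelled $\alpha_i$; it is a covering map if it is bijective on links of vertices, equivalently if at every vertex there is exactly one incoming and exactly one outgoing edge labelled $\alpha_i$ for each $i$. For a covering $Y\to X$, $F$ acts on the vertices of $Y$ by path lifting: for a vertex $y$ and $\gamma\in F$ viewed as a loop at $x_0$, $\gamma.y$ is the endpoint of the unique lift of $\gamma$ starting at $y$; concretely, $\alpha_i$ sends $u$ to $v$ when there is an edge labelled $\alpha_i$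 oriented from $u$ to $v$. *)

From mathcomp Require Import all_boot all_fingroup all_solvable.
Set Implicit Arguments. Unset Strict Implicit. Unset Printing Implicit Defensive.


(* A finite graph over the rose with r petals: a combinatorial map to the rose
   is the same as an orientation (src/tgt) and a labelling of the edges by
   the generators alpha_0, ..., alpha_(r-1) (indexed by 'I_r). *)
Record lgraph (r : nat) := LGraph {
  vert : finType;
  edge : finType;
  src : edge -> vert;
  tgt : edge -> vert;
  lab : edge -> 'I_r }.

Section LGraphDefs.
Variable r : nat.
Variable G : lgraph r.

Definition out_edges (v : vert G) (i : 'I_r) : {set edge G} :=
  [set e | (src e == v) && (lab e == i)].
Definition in_edges (v : vert G) (i : 'I_r) : {set edge G} :=
  [set e | (tgt e == v) && (lab e == i)].

(* Immersion: injective on links, i.e. at most one incoming and one outgoing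
   edge with each label at each vertex. *)
Definition immersion : Prop :=
  forall v i, #|out_edges v i| <= 1 /\ #|in_edges v i| <= 1.

(* Covering map: bijective on links. *)
Definition covering : Prop :=
  forall v i, #|out_edges v i| = 1 /\ #|in_edges v i| = 1.

Definition adj : rel (vert G) :=
  fun u v => [exists e : edge G,
    ((src e == u) && (tgt e == v)) || ((src e == v) && (tgt e == u))].
Definition connected : Prop := forall u v : vert G, connect adj u v.

(* sigma i is the permutation of vertices induced by the generator alpha_i
   (path lifting): alpha_i sends u to v when an edge labelled alpha_i goes
   from u to v.  For a covering such sigma exists and is unique. *)
Definition lifts (sigma : 'I_r -> {perm vert G}) : Prop :=
  forall e : edge G, sigma (lab e) (src e) = tgt e.

(* Image of F -> Sym(V(G)): the subgroup generated by the images of the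
   generators. *)
Definition monodromy (sigma : 'I_r -> {perm vert G}) : {set {perm vert G}} :=
  <<[set sigma i | i : 'I_r]>>%g.
End LGraphDefs.

Definition subgraph_embedding (r : nat) (Z Y : lgraph r)
  (fV : vert Z -> vert Y) (fE : edge Z -> edge Y) : Prop :=
  [/\ injective fV, injective fE,
      forall e, src (fE e) = fV (src e),
      forall e, tgt (fE e) = fV (tgt e)
    & forall e, lab (fE e) = lab e].

From mathcomp Require Import all_boot all_fingroup all_solvable zify.
Set Implicit Arguments. Unset Strict Implicit. Unset Printing Implicit Defensive.
Import GroupScope.

(* Each label of the immersion Z is a partial injection of V(Z); extend it to a
   permutation zeta_i.  As Z is not a cover, some vertex b has no incoming
   alpha_i0-edge.  Take a label j <> i0 and an odd prime q above 2|V(Z)| and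
   the order of zeta_j.  The cover Y consists of two copies of Z and a q-cycle:
   alpha_i acts by zeta_i on both copies (an even permutation), alpha_j also
   rotates the cycle (an even q-cycle), and alpha_i0 is followed by a 3-cycle
   through both copies of b and the cycle.  As q is prime to the order of
   zeta_j, a power of alpha_j is a generating power of the rotation, whose
   commutator with alpha_i0 is a 3-cycle through b and two consecutive points
   of the cycle.  Rotating it gives all 3-cycles on q + 1 >= |V(Y)|/2 + 1
   points; in a transitive group such a set of points grows to all of V(Y),
   and the 3-cycles generate the alternating group. *)

Section ThreeCycles.
Variable T : finType.
Implicit Types x y z w : T.

(* x |-> y |-> z |-> x for distinct points (products act left to right). *)
Definition cyc3 x y z : {perm T} := tperm x y * tperm x z.

Lemma cyc3xx x y : cyc3 x y y = 1.
Proof. exact: tperm2. Qed.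

Lemma cyc3V x y z : (cyc3 x y z)^-1 = cyc3 x z y.
Proof. by rewrite invMg !tpermV. Qed.

Lemma cyc3M x y z w : cyc3 x y z * cyc3 x z w = cyc3 x y w.
Proof. by rewrite /cyc3 mulgA -(mulgA _ _ (tperm x z)) tperm2 mulg1. Qed.

Lemma cyc3J x y z (g : {perm T}) : cyc3 x y z ^ g = cyc3 (g x) (g y) (g z).
Proof. by rewrite conjMg !tpermJ. Qed.

Lemma cyc3_rot x y z : x != z -> y != z -> cyc3 x y z = cyc3 y z x.
Proof.
move=> xz yz; rewrite /cyc3; have -> : tperm y z = tperm x z ^ tperm x y.
  by rewrite tpermJ tpermL tpermD.
by rewrite conjgE tpermV (tpermC y) -!mulgA tperm2 mulg1.
Qed.

Lemma cyc3_fix x y z v : x != v -> y != v -> z != v -> cyc3 x y z v = v.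
Proof. by move=> xv yv zv; rewrite permM !tpermD. Qed.

Lemma cyc3_first x y z : x != y -> z != y -> cyc3 x y z x = y.
Proof. by move=> xy zy; rewrite permM tpermL tpermD. Qed.

Lemma cyc3_second x y z : cyc3 x y z y = z.
Proof. by rewrite permM tpermR tpermL. Qed.

Lemma odd_cyc3 x y z : x != y -> x != z -> ~~ odd_perm (cyc3 x y z).
Proof. by move=> xy xz; rewrite odd_permM !odd_tperm xy xz. Qed.

End ThreeCycles.

Section Cyc3Closed.
Variables (T : finType) (G : {group {perm T}}).

Definition cyc3_closed (S : {set T}) : Prop :=
  forall x y z, x \in S -> y \in S -> z \in S ->
  x != y -> y != z -> x != z -> cyc3 x y z \in G.

Lemma cyc3_closed_setU1 S x y z : cyc3_closed S -> x \in S -> y \in S ->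
  x != y -> x != z -> y != z -> cyc3 x y z \in G -> cyc3_closed (z |: S).
Proof.
move=> clS xS yS xy xz yz xyz_in.
have zx_in a : a \in S -> a != z -> cyc3 z x a \in G.
  move=> aS az; have [->|ax] := eqVneq a x; first by rewrite cyc3xx group1.
  rewrite cyc3_rot 1?eq_sym // -(cyc3M x a y z) groupM //.
  by have [->|ay] := eqVneq a y; rewrite ?cyc3xx ?group1 // clS // eq_sym.
have za_in a c : a \in S -> c \in S -> a != z -> c != z -> cyc3 z a c \in G.
  by move=> aS cS az cz; rewrite -(cyc3M z a x c) -cyc3V groupM ?groupV ?zx_in.
move=> a c d; rewrite !in_setU1.
have [-> _ /predU1P[->|cS] /predU1P[->|dS]|az /= aS] := eqVneq a z;
  rewrite ?eqxx //.
  by move=> zc cd zd; apply: za_in; rewrite // eq_sym.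
have [-> _ /predU1P[->|dS]|cz /= cS] := eqVneq c z; rewrite ?eqxx //.
  by move=> _ zd ad; rewrite cyc3_rot //; apply: za_in; rewrite // eq_sym.
have [-> _ ac _ _|dz /= dS] := eqVneq d z; last exact: clS.
by rewrite -(cyc3_rot (x := z)) ?(eq_sym z) //; apply: za_in.
Qed.

Lemma cyc3_closedU S S' x y : cyc3_closed S -> cyc3_closed S' ->
  x \in S :&: S' -> y \in S :&: S' -> x != y -> cyc3_closed (S :|: S').
Proof.
move=> clS clS' /setIP[xS xS'] /setIP[yS yS'] xy.
rewrite -[S']set_enum; have : {subset enum S' <= S'} by move=> v; rewrite mem_enum.
elim: (enum S') => [|z s IHs] sS'; first by rewrite set_nil setU0.
rewrite set_cons setUCA.
have zS' := sS' z (mem_head z s).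
have {}IHs : cyc3_closed (S :|: [set:: s]).
  by apply: IHs => v sv; apply: sS'; rewrite inE sv orbT.
have xA : x \in S :|: [set:: s] by rewrite inE xS.
have yA : y \in S :|: [set:: s] by rewrite inE yS.
have [zA|zA] := boolP (z \in S :|: [set:: s]); first by rewrite (setUidPr _) // sub1set.
have xz : x != z by apply: contraNneq zA => <-.
have yz : y != z by apply: contraNneq zA => <-.
exact: (cyc3_closed_setU1 IHs xA yA xy xz yz (clS' _ _ _ xS' yS' zS' xy yz xz)).
Qed.

Lemma cyc3_closed_chain x (w : nat -> T) n :
    (forall k, x != w k) -> (forall k, w k != w k.+1) ->
    (forall k, cyc3 x (w k.+1) (w k) \in G) ->
  cyc3_closed (x |: [set:: map w (iota 0 n.+1)]).
Proof.
move=> xw ww cyc3_in; elim: n => [|n IHn].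
  by move=> a c d; rewrite !inE => /orP[]/eqP-> /orP[]/eqP-> /orP[]/eqP->; rewrite ?eqxx.
have -> : [set:: map w (iota 0 n.+2)] = w n.+1 |: [set:: map w (iota 0 n.+1)].
  by apply/setP => v; rewrite -addn1 iotaD add0n cats1 map_rcons in_setU1 !in_set mem_rcons.
rewrite setUCA; apply: (cyc3_closed_setU1 (y := w n)) IHn _ _ _ _ _ _ => //.
- by rewrite in_setU1 eqxx.
- by rewrite in_setU1 in_set (map_f w) ?orbT // mem_iota leq0n add0n ltnSn.
- by rewrite -(cyc3V x) groupV.
Qed.

(* A translate g S meets S in at least two points, hence S :|: g S is again
   closed; choose g moving a point of S outside S. *)
Lemma cyc3_closed_grow S : (forall u v, exists2 g, g \in G & g u = v) ->
  cyc3_closed S -> #|T| + 2 <= 2 * #|S| -> cyc3_closed [set: T].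
Proof.
move=> trG; have [n] := ubnP #|~: S|; elim: n S => // n IH S.
case: (set_0Vmem (~: S)) => [/(congr1 (@setC T))|[u]]; first by rewrite setCK setC0 => ->.
rewrite inE => uS ltSn clS bigS.
have /card_gt0P[x xS] : 0 < #|S| by lia.
have [g gG gx] := trG x u; pose gS := g @: S.
have clgS : cyc3_closed gS.
  move=> _ _ _ /imsetP[a aS ->] /imsetP[b bS ->] /imsetP[c cS ->] ab bc ac.
  by rewrite -cyc3J groupJ // clS //; [move: ab | move: bc | move: ac];
    apply: contraNneq => ->.
have card_gS : #|gS| = #|S| by rewrite card_imset //; apply: perm_inj.
have /card_gt1P[v [w [vSgS wSgS vw]]] : 1 < #|S :&: gS|.
  by have := cardsUI S gS; have := max_card (S :|: gS); lia.
have lt_S_SgS : #|S| < #|S :|: gS|.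
  apply/proper_card/properUl; apply: contra uS => /subsetP; apply.
  by rewrite -gx imset_f.
apply: (IH (S :|: gS)); first by have := cardsC S; have := cardsC (S :|: gS); lia.
  exact: cyc3_closedU vSgS wSgS vw.
lia.
Qed.

Lemma Alt_sub_cyc3_closed : cyc3_closed [set: T] -> 'Alt_T \subset G.
Proof.
move=> clT; have cyc3_in a b c : a != b -> b != c -> a != c -> cyc3 a b c \in G.
  by apply: clT; rewrite inE.
have tperm_tperm_in a b c : a != b -> a != c -> tperm a b * tperm a c \in G.
  move=> ab ac; have [<-|bc] := eqVneq b c; first by rewrite tperm2 group1.
  by apply: cyc3_in.
have tperm_pair_in a b c d : a != b -> c != d -> tperm a b * tperm c d \in G.
  have [<-|ca] := eqVneq c a; first exact: tperm_tperm_in.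
  have [<-|da] := eqVneq d a.
    by rewrite (tpermC c) => db dc; apply: tperm_tperm_in; rewrite // eq_sym.
  have [<-|cb] := eqVneq c b; first by rewrite tpermC => _; apply: tperm_tperm_in.
  have [<-|db] := eqVneq d b.
    by rewrite tpermC (tpermC c) => _ cd; apply: tperm_tperm_in; rewrite // eq_sym.
  move=> ab cd.
  have -> : tperm a b * tperm c d = cyc3 a b c * cyc3 c a d.
    by rewrite /cyc3 mulgA -(mulgA _ (tperm a c)) (tpermC a c) tperm2 mulg1.
  by rewrite groupM ?cyc3_in // eq_sym.
apply/subsetP => p; rewrite Alt_even; case: (prod_tpermP p) => ts -> dts.
rewrite odd_perm_prod //; have [n] := ubnP (size ts).
elim: n ts dts => // n IH [|[a b] [|[c d] ts]] //=; first by rewrite big_nil group1.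
move=> /and3P[ab cd dts] /ltnSE lt_ts_n; rewrite negbK => even_ts.
rewrite !big_cons mulgA groupM ?tperm_pair_in ?IH //.
exact: leq_ltn_trans lt_ts_n.
Qed.

End Cyc3Closed.

(* Sym T is #|T|-transitive, so it maps the tuple of sources onto the tuple of
   targets. *)
Lemma perm_of_matching (E T : finType) (A : {set E}) (s t : E -> T) :
  {in A &, injective s} -> {in A &, injective t} ->
  exists p : {perm T}, {in A, forall e, p (s e) = t e}.
Proof.
move=> s_inj t_inj.
have dtuple_map f : {in A &, injective f} ->
    [tuple of map f (enum_tuple A)] \in #|A|.-dtuple([set: T]).
  move=> f_inj; rewrite inE map_inj_in_uniq ?enum_uniq; last first.
    by move=> e e'; rewrite !mem_enum; apply: f_inj.
  by apply/subsetP => v; rewrite inE.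
have leAT : #|A| <= #|T| by rewrite -(card_in_imset s_inj) max_card.
have trSym := ntransitive_weak leAT (Sym_trans T).
have [p _ /(congr1 val) /=] := atransP2 trSym (dtuple_map s s_inj) (dtuple_map t t_inj).
rewrite -map_comp => /esym/eq_in_map Est.
by exists p => e eA; rewrite -Est ?mem_enum.
Qed.

Section LGraphFacts.
Variables (r : nat) (Z : lgraph r).

Lemma adj_sym : symmetric (adj (G := Z)).
Proof. by move=> u v; apply/existsP/existsP => -[e]; exists e; rewrite orbC. Qed.

Lemma immersion_lifts : immersion Z -> exists zeta : 'I_r -> {perm vert Z}, lifts zeta.
Proof.
move=> immZ; have /fin_all_exists[zeta zetaE] : forall i : 'I_r, exists p : {perm vert Z},
    {in [set e | lab e == i], forall e, p (src e) = tgt e}.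
  move=> i; apply: perm_of_matching => e e'; rewrite !inE => /eqP le /eqP le' Eee'.
    have [/card_le1_eqP out_le1 _] := immZ (src e) i.
    by apply: out_le1; rewrite inE ?Eee' ?le ?le' !eqxx.
  have [_ /card_le1_eqP in_le1] := immZ (tgt e) i.
  by apply: in_le1; rewrite inE ?Eee' ?le ?le' !eqxx.
by exists zeta => e; apply: zetaE; rewrite inE.
Qed.

(* At a vertex v with one incoming but no outgoing i-edge, no i-edge can end
   at zeta_i v. *)
Lemma not_covering_in_edges0 (zeta : 'I_r -> {perm vert Z}) :
  immersion Z -> lifts zeta -> ~ covering Z ->
  exists (i : 'I_r) (b : vert Z), in_edges b i = set0.
Proof.
move=> immZ zetaE ncovZ.
have [v [i not_bij]] : exists (v : vert Z) (i : 'I_r),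
    ~~ ((#|out_edges v i| == 1%N) && (#|in_edges v i| == 1%N)).
  case: (boolP [forall v : vert Z, forall i : 'I_r,
                 (#|out_edges v i| == 1%N) && (#|in_edges v i| == 1%N)]).
    move=> /forallP cov; case: ncovZ => v i.
    by have /andP[/eqP-> /eqP->] := forallP (cov v) i.
  by case/forallPn => v /forallPn[i]; exists v, i.
have [out_le1 in_le1] := immZ v i.
have [/eqP|in_gt0] := posnP #|in_edges v i|; first by rewrite cards_eq0 => /eqP; exists i, v.
have out0 : out_edges v i = set0.
  by apply/eqP; rewrite -cards_eq0; move: not_bij in_gt0 in_le1 out_le1; lia.
exists i, (zeta i v); apply/setP => e; rewrite !inE.
apply/negbTE/andP => -[/eqP tgt_e /eqP lab_e].
have /setP/(_ e) := out0; rewrite !inE lab_e eqxx andbT => /negbT/negP; apply.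
by apply/eqP/(@perm_inj _ (zeta i)); rewrite -lab_e zetaE tgt_e lab_e.
Qed.

End LGraphFacts.

Section Monodromy.
Variables (r : nat) (Y : lgraph r) (sigma : 'I_r -> {perm vert Y}).

Canonical monodromy_group := Eval hnf in [group of monodromy sigma].

Lemma mem_monodromy i : sigma i \in monodromy sigma.
Proof. exact/mem_gen/imset_f. Qed.

Lemma monodromy_transitive : connected Y -> lifts sigma ->
  forall u v, exists2 g, g \in monodromy sigma & g u = v.
Proof.
move=> connY sigmaE u v; have /connectP[p] := connY u v.
elim: p u => [|w p IHp] u /=; first by move=> _ ->; exists 1; rewrite ?group1 ?perm1.
case/andP => /existsP[e uw] /IHp IHwp /IHwp[g gG gw].
have [h hG hu] : exists2 h, h \in monodromy sigma & h u = w.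
  case/orP: uw => /andP[/eqP <- /eqP <-]; first by exists (sigma (lab e)); rewrite ?mem_monodromy.
  by exists (sigma (lab e))^-1; rewrite ?groupV ?mem_monodromy // -sigmaE permK.
by exists (h * g); rewrite ?groupM // permM hu.
Qed.

Lemma monodromy_Alt : (forall i, ~~ odd_perm (sigma i)) ->
  cyc3_closed (monodromy sigma) [set: vert Y] -> monodromy sigma = 'Alt_(vert Y).
Proof.
move=> sigma_even clY; apply/eqP; rewrite eqEsubset Alt_sub_cyc3_closed // andbT.
by rewrite gen_subG; apply/subsetP => _ /imsetP[i _ ->]; rewrite Alt_even.
Qed.

End Monodromy.

Lemma odd_permX (T : finType) (s : {perm T}) n : odd_perm (s ^+ n) = odd n && odd_perm s.
Proof.
elim: n => [|n IHn]; first by rewrite expg0 odd_perm1.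
by rewrite expgS odd_permM IHn /=; case: (odd n); case: (odd_perm s).
Qed.

Lemma val_iter_ordS q (i : 'I_q) n : iter n (@ordS q) i = (i + n) %% q :> nat.
Proof.
elim: n => [|n IHn]; first by rewrite addn0 modn_small.
by rewrite iterS /= IHn -[((i + n) %% q).+1]addn1 modnDml addn1 addnS.
Qed.

Section DoubleCoverWithCycle.
Variables (r : nat) (Z : lgraph r).
Variable zeta : 'I_r -> {perm vert Z}.
Hypothesis zeta_lifts : lifts zeta.
Variables (i0 j : 'I_r) (b : vert Z).
Hypothesis j_neq_i0 : j != i0.
Hypothesis in_edges_b0 : in_edges b i0 = set0.
Variable q : nat.
Hypotheses (q_gt1 : 1 < q) (q_odd : odd q).

Local Notation ordS := (@ordS q).

Definition cover_vert : finType := ((bool * vert Z) + 'I_q)%type.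
Definition copy k v : cover_vert := inl (k, v).
Definition cyc i : cover_vert := inr i.

Lemma copy_inj k : injective (copy k). Proof. by move=> u v [->]. Qed.
Lemma cyc_inj : injective cyc. Proof. by move=> u v [->]. Qed.

Definition w0 : 'I_q := Ordinal (ltnW q_gt1).
Definition w1 : 'I_q := Ordinal q_gt1.

Lemma ordS_neq i : ordS i != i.
Proof.
apply/eqP => /(congr1 val) /=; have := ltn_ord i.
by rewrite leq_eqVlt => /predU1P[iq|iq]; [rewrite iq modnn | rewrite modn_small]; lia.
Qed.

Lemma ordS_w0 : ordS w0 = w1.
Proof. by apply: val_inj; rewrite /= modn_small. Qed.

Definition dup_fun (z : {perm vert Z}) (x : cover_vert) : cover_vert :=
  if x is inl (k, v) then copy k (z v) else x.

Lemma dup_fun_inj z : injective (dup_fun z).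
Proof. by move=> [[k u]|i] [[l v]|i'] //= [-> /perm_inj ->]. Qed.

Definition dup z : {perm cover_vert} := perm (@dup_fun_inj z).

Definition rot_fun (x : cover_vert) : cover_vert :=
  if x is inr i then cyc (ordS i) else x.

Lemma rot_fun_inj : injective rot_fun.
Proof. by move=> [x|i] [y|i'] //= /cyc_inj /ordS_inj ->. Qed.

Definition rot : {perm cover_vert} := perm rot_fun_inj.

(* Attaching both copies of [b] to the cycle keeps Z embedded, as no i0-edge
   of Z ends at [b]. *)
Definition tri : {perm cover_vert} := cyc3 (copy false b) (copy true b) (cyc w1).

Definition sigmaY i : {perm cover_vert} :=
  dup (zeta i) * (if i == j then rot else 1) * (if i == i0 then tri else 1).

Definition cover : lgraph r :=
  @LGraph r cover_vert ('I_r * cover_vert)%type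
    (fun e => e.2) (fun e => sigmaY e.1 e.2) (fun e => e.1).

Lemma dup_copy z k v : dup z (copy k v) = copy k (z v). Proof. by rewrite permE. Qed.
Lemma dup_cyc z i : dup z (cyc i) = cyc i. Proof. by rewrite permE. Qed.

Lemma rot_copy k v : rot (copy k v) = copy k v. Proof. by rewrite permE. Qed.
Lemma rot_cyc i : rot (cyc i) = cyc (ordS i). Proof. by rewrite permE. Qed.

Lemma rotX_copy n k v : (rot ^+ n) (copy k v) = copy k v.
Proof. by elim: n => [|n IHn]; rewrite ?perm1 // expgSr permM IHn rot_copy. Qed.

Lemma rotX_cyc n i : (rot ^+ n) (cyc i) = cyc (iter n ordS i).
Proof. by elim: n => [|n IHn]; rewrite ?perm1 // expgSr permM IHn rot_cyc. Qed.

Lemma rot_order : rot ^+ q = 1.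
Proof.
apply/permP => -[[k v]|i]; rewrite perm1; first exact: rotX_copy.
by rewrite rotX_cyc; congr cyc; apply/val_inj; rewrite /= val_iter_ordS modnDr modn_small.
Qed.

Lemma dupM z z' : dup (z * z') = dup z * dup z'.
Proof. by apply/permP => -[[k v]|i]; rewrite permM !permE //= permM. Qed.

Lemma dup1 : dup 1 = 1.
Proof. by apply/permP => -[[k v]|i]; rewrite !permE //= perm1. Qed.

Lemma dupX z n : dup (z ^+ n) = dup z ^+ n.
Proof. by elim: n => [|n IHn]; rewrite ?dup1 // !expgS dupM IHn. Qed.

Lemma dup_rot_commute z : commute (dup z) rot.
Proof. by apply/permP => -[[k v]|i]; rewrite !permM !permE. Qed.

Lemma dup_tperm u v :
  dup (tperm u v) = tperm (copy false u) (copy false v) * tperm (copy true u) (copy true v).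
Proof.
apply/permP => -[[k x]|i]; rewrite permM permE /=; last by rewrite !tpermD.
rewrite -/(copy k x); case: k.
  by rewrite [tperm (copy false u) _ _]tpermD // (inj_tperm _ _ _ (@copy_inj true)).
by rewrite -(inj_tperm _ _ _ (@copy_inj false)) [tperm (copy true u) _ _]tpermD.
Qed.

Lemma odd_dup z : ~~ odd_perm (dup z).
Proof.
case: (prod_tpermP z) => ts -> _; elim: ts => [|t ts IHts].
  by rewrite big_nil dup1 odd_perm1.
by rewrite big_cons dupM odd_permM dup_tperm odd_permM !odd_tperm !(inj_eq (@copy_inj _)) addbb.
Qed.

Lemma odd_rot : ~~ odd_perm rot.
Proof. by have := odd_permX rot q; rewrite rot_order odd_perm1 q_odd /= => <-. Qed.

Lemma tri_false : tri (copy false b) = copy true b. Proof. exact: cyc3_first. Qed.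
Lemma tri_true : tri (copy true b) = cyc w1. Proof. exact: cyc3_second. Qed.

Lemma odd_tri : ~~ odd_perm tri.
Proof. exact: odd_cyc3. Qed.

Lemma odd_sigmaY i : ~~ odd_perm (sigmaY i).
Proof.
rewrite /sigmaY !odd_permM (negbTE (odd_dup _)).
by case: eqP => _; case: eqP => _; rewrite ?odd_perm1 ?(negbTE odd_rot) ?(negbTE odd_tri).
Qed.

Lemma sigmaY_j : sigmaY j = dup (zeta j) * rot.
Proof. by rewrite /sigmaY eqxx (negbTE j_neq_i0) mulg1. Qed.

Lemma sigmaY_i0 : sigmaY i0 = dup (zeta i0) * tri.
Proof. by rewrite /sigmaY eqxx eq_sym (negbTE j_neq_i0) mulg1. Qed.

Lemma sigmaY_j_cyc i : sigmaY j (cyc i) = cyc (ordS i).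
Proof. by rewrite sigmaY_j permM dup_cyc rot_cyc. Qed.

Lemma sigmaY_copy i k v :
  sigmaY i (copy k v) = (if i == i0 then tri else 1) (copy k (zeta i v)).
Proof. by rewrite /sigmaY !permM dup_copy; case: (i == j); rewrite ?perm1 ?rot_copy. Qed.

Lemma sigmaY_edge k (e : edge Z) : sigmaY (lab e) (copy k (src e)) = copy k (tgt e).
Proof.
rewrite sigmaY_copy zeta_lifts; case: eqP => [lab_e|_]; last by rewrite perm1.
have tgt_e : tgt e != b.
  by have /negbT := in_set0 e; rewrite -in_edges_b0 inE lab_e eqxx andbT.
by case: k; rewrite cyc3_fix // (inj_eq (@copy_inj _)) eq_sym.
Qed.

Lemma cover_covering : covering cover.
Proof.
move=> v i; split.
  suff -> : out_edges v i = [set (i, v)] by rewrite cards1.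
  by apply/setP => -[k x]; rewrite !inE /= xpair_eqE andbC.
suff -> : in_edges v i = [set (i, (sigmaY i)^-1 v)] by rewrite cards1.
apply/setP => -[k x]; rewrite !inE /= xpair_eqE.
by have [->|] := eqVneq k i; rewrite ?andbF // andbT (canF_eq (permK _)).
Qed.

Lemma cover_embedding : immersion Z ->
  subgraph_embedding (Y := cover) (copy false) (fun e => (lab e, copy false (src e))).
Proof.
move=> immZ; split=> //; first exact: copy_inj.
  move=> e e' [lab_e src_e].
  have [/card_le1_eqP out_le1 _] := immZ (src e) (lab e).
  by apply: out_le1; rewrite inE -?src_e -?lab_e !eqxx.
by move=> e; rewrite /= sigmaY_edge.
Qed.

Lemma adj_sigmaY i x : adj (G := cover) x (sigmaY i x).
Proof. by apply/existsP; exists (i, x); rewrite /= !eqxx. Qed.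

Local Notation conn := (connect (adj (G := cover))).

Lemma cover_connect_sym : connect_sym (adj (G := cover)).
Proof. exact/sym_connect_sym/adj_sym. Qed.

Lemma connect_copy k u v : connect (adj (G := Z)) u v -> conn (copy k u) (copy k v).
Proof.
case/connectP=> p; elim: p u => [u _ ->|w p IHp u /=]; first exact: connect0.
case/andP=> /existsP[e /orP[]] /andP[/eqP src_e /eqP tgt_e] /IHp IHwp /IHwp.
  by apply: connect_trans; rewrite -src_e -tgt_e -sigmaY_edge connect1 ?adj_sigmaY.
apply: connect_trans; rewrite cover_connect_sym -src_e -tgt_e -sigmaY_edge.
exact/connect1/adj_sigmaY.
Qed.

Lemma connect_cyc i : conn (cyc i) (cyc w0).
Proof.
rewrite cover_connect_sym; have -> : i = iter i ordS w0.
  by apply/val_inj; rewrite /= val_iter_ordS add0n modn_small.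
elim: (nat_of_ord i) => [|n IHn] //=; apply: connect_trans IHn (connect1 _).
by rewrite -sigmaY_j_cyc adj_sigmaY.
Qed.

Lemma cover_connected : connected Z -> connected cover.
Proof.
move=> connZ; pose a := (zeta i0)^-1 b.
have sigmaY_copy_a k : sigmaY i0 (copy k a) = tri (copy k b).
  by rewrite sigmaY_copy eqxx permKV.
have conn_true v : conn (copy true v) (cyc w0).
  apply: connect_trans (connect_copy true (connZ v a)) (connect_trans _ (connect_cyc w1)).
  by apply: connect1; rewrite -tri_true -sigmaY_copy_a adj_sigmaY.
have conn_false v : conn (copy false v) (cyc w0).
  apply: connect_trans (connect_copy false (connZ v a)) (connect_trans _ (conn_true b)).
  by apply: connect1; rewrite -tri_false -sigmaY_copy_a adj_sigmaY.
have conn_w0 x : conn x (cyc w0).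
  by case: x => [[[] v]|i]; [apply: conn_true | apply: conn_false | apply: connect_cyc].
by move=> x y; apply: connect_trans (conn_w0 x) _; rewrite cover_connect_sym.
Qed.

Lemma cover_lifts : lifts (G := cover) sigmaY. Proof. by []. Qed.

Local Notation monoY := (monodromy (G := cover) sigmaY).

Hypothesis q_coprime : coprime q #[zeta j].

Lemma rot_in_monodromy : rot \in monoY.
Proof.
have rotN_in : rot ^+ #[zeta j] \in monoY.
  rewrite -[_ ^+ _]mul1g -dup1 -(expg_order (zeta j)) dupX -expgMn; last exact: dup_rot_commute.
  by rewrite -sigmaY_j groupX ?(mem_monodromy (Y := cover)).
have cop : coprime #|<[rot]>| #[zeta j].
  by apply: coprime_dvdl q_coprime; rewrite order_dvdn rot_order.
by rewrite -(expgK cop (cycle_id rot)) groupX.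
Qed.

(* Since [dup (zeta i0)] commutes with [rot], conjugating [rot] by [sigmaY i0]
   amounts to conjugating it by the 3-cycle [tri]. *)
Lemma cyc3_w1w0_in : cyc3 (copy false b) (cyc w1) (cyc w0) \in monoY.
Proof.
have rotV_copy k v : rot^-1 (copy k v) = copy k v by rewrite -{1}rot_copy permK.
have rotV_w1 : rot^-1 (cyc w1) = cyc w0 by rewrite -ordS_w0 -rot_cyc permK.
have -> : cyc3 (copy false b) (cyc w1) (cyc w0) = rot ^ sigmaY i0 * rot^-1.
  rewrite sigmaY_i0 conjgM [rot ^ dup _]conjgE -dup_rot_commute mulKg.
  have -> : rot ^ tri * rot^-1 = tri^-1 * tri ^ rot^-1 by rewrite !conjgE invgK !mulgA.
  by rewrite cyc3J cyc3V !rotV_copy rotV_w1 cyc3M.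
by rewrite groupM ?groupV ?groupJ ?rot_in_monodromy ?(mem_monodromy (Y := cover)).
Qed.

Hypothesis q_large : 2 * #|vert Z| <= q.

Lemma cover_cyc3_closed : connected Z ->
  cyc3_closed monoY [set: cover_vert].
Proof.
move=> connZ; pose w n := cyc (iter n ordS w0).
have w_chain k : cyc3 (copy false b) (w k.+1) (w k) \in monoY.
  have := groupJ cyc3_w1w0_in (groupX k rot_in_monodromy).
  by rewrite cyc3J rotX_copy !rotX_cyc /w iterSr ordS_w0.
have w_neq k : w k != w k.+1.
  by rewrite (inj_eq cyc_inj) iterS eq_sym ordS_neq.
have cycS : cyc @: [set: 'I_q] \subset [set:: map w (iota 0 q.-1.+1)].
  apply/subsetP => _ /imsetP[i _ ->]; rewrite inE prednK ?(ltnW q_gt1) //.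
  apply/mapP; exists (val i); first by rewrite mem_iota leq0n add0n ltn_ord.
  by congr cyc; apply/val_inj; rewrite /= val_iter_ordS add0n modn_small.
apply: cyc3_closed_grow (cyc3_closed_chain (n := q.-1) _ w_neq w_chain) _ => //.
  exact: monodromy_transitive (cover_connected connZ) cover_lifts.
have /subset_leq_card : copy false b |: (cyc @: [set: 'I_q]) \subset
    copy false b |: [set:: map w (iota 0 q.-1.+1)] by apply: setUS.
rewrite cardsU1 card_imset ?cardsT ?card_ord; last exact: cyc_inj.
have -> : copy false b \notin cyc @: [set: 'I_q] by apply/imsetP => -[].
rewrite card_sum card_prod card_bool card_ord; lia.
Qed.

Lemma cover_monodromy : connected Z -> monoY = 'Alt_cover_vert.
Proof. by move=> connZ; apply: monodromy_Alt; [exact: odd_sigmaY | exact: cover_cyc3_closed]. Qed.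

End DoubleCoverWithCycle.

Theorem lemma3p3 (r : nat) (Z : lgraph r) :
  2 <= r ->
  0 < #|vert Z| ->
  connected Z ->
  immersion Z ->
  ~ covering Z ->
  exists (Y : lgraph r) (fV : vert Z -> vert Y) (fE : edge Z -> edge Y)
         (sigma : 'I_r -> {perm vert Y}),
    [/\ subgraph_embedding fV fE,
        connected Y,
        covering Y,
        lifts sigma
      & monodromy sigma = ('Alt_(vert Y))%g].
Proof.
move=> r_ge2 Z_gt0 connZ immZ ncovZ.
have [zeta zeta_lifts] := immersion_lifts immZ.
have [i0 [b in_b0]] := not_covering_in_edges0 immZ zeta_lifts ncovZ.
have [j j_i0] : exists j : 'I_r, j != i0.
  have /card_gt0P[j] : 0 < #|[set~ i0]| by rewrite cardsC1 card_ord; lia.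
  by rewrite !inE; exists j.
have [q] := prime_above (maxn (2 * #|vert Z|) #[zeta j]).
rewrite gtn_max => /andP[Z_lt_q ord_lt_q] prime_q.
have q_gt1 := prime_gt1 prime_q.
have q_odd : odd q by case: (even_prime prime_q) => // q2; rewrite q2 in Z_lt_q; lia.
have q_coprime : coprime q #[zeta j] by rewrite prime_coprime // gtnNdvd.
exists (cover zeta i0 j b q_gt1), (copy q false), (fun e => (lab e, copy q false (src e))),
  (sigmaY zeta i0 j b q_gt1); split.
- exact: cover_embedding.
- exact: cover_connected.
- exact: cover_covering.
- exact: cover_lifts.
- by apply: cover_monodromy => //; apply: ltnW.
Qed.
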